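(* The subgroup of Brunnian braids in $P_n$, namely $\bigcap_{i=1}^n Q_{\{i\}}$, is equal to the subgroup of $P_n$ generated by all monic commutators $x$ with $\sigma(x)=N=\{1,\dots,n\}$.
   Context: $P_n$ denotes the pure braid group on $n$ strands, generated by elements $p_{a,b}$ for $1\le a<b\le n$ subject to the relations: (A) $p_{a,b}p_{a,c}p_{b,c}=p_{a,c}p_{b,c}p_{a,b}=p_{b,c}p_{a,b}p_{a,c}$ for $1\le a<b<c\le n$; (B) $p_{a,b}p_{c,d}=p_{c,d}p_{a,b}$ and $p_{a,d}p_{b,c}=p_{b,c}p_{a,d}$ for $1\le a<b<c<d\le n$; (C) $p_{a,c}p_{b,c}^{-1}p_{b,d}p_{b,c}=p_{b,c}^{-1}p_{b,d}p_{b,c}p_{a,c}$ for $1\le a<b<c<d\le n$. Let $N=\{1,\dots,n\}$. For $S\subseteq N$: $P_S$ is the subgroup generated by the $p_{a,b}$ with $a,b\in S$; $Q_S$ is the subgroup generated by the $p_{a,b}$ with $a\in S$ or $b\in S$. A pure braid is Brunnian if deleting any single strand gives the trivial braid, i.e. it lies in $Q_{\{i\}}$ for every $i\in N$. Commutator convention: $[x,y]=x^{-1}y^{-1}xy$. Monic commutators are defined recursively: each $p_{a,b}$ and $p_{a,b}^{-1}$ ($1\le a<b\le n$) is a monic commutator; if $x,y$ are monic commutators and $[x,y]\neq1$, then $[x,y]$ is a monic commutator. The support $\sigma(x)$ of $x\in P_n$ is the intersection of all $S\subseteq N$ such that $x\in P_S$. *)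

(* The pure braid group P_n is encoded by its presentation:
   elements are words in the letters p_{a,b}^{+-1} (1 <= a < b <= n),
   modulo the congruence generated by free cancellation and the relations
   (A), (B), (C). Subgroups are predicates on words closed under this
   equivalence. *)
From Stdlib Require Import List Arith Lia.
Import ListNotations.

(* A letter p_{a,b}^{e}, e = true for exponent +1, false for -1. *)
Record letter := Letter { la : nat; lb : nat; lsgn : bool }.

Definition word := list letter.

Definition p (a b : nat) : letter := Letter a b true.
Definition pinv (a b : nat) : letter := Letter a b false.

Definition linv (x : letter) : letter := Letter (la x) (lb x) (negb (lsgn x)).

Definition winv (w : word) : word := rev (map linv w).

Definition wcomm (x y : word) : word := winv x ++ winv y ++ x ++ y.

Definition valid_letter (n : nat) (x : letter) : Prop :=
  1 <= la x /\ la x < lb x /\ lb x <= n.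

Definition valid (n : nat) (w : word) : Prop := Forall (valid_letter n) w.

Inductive braid_rel (n : nat) : word -> word -> Prop :=
| relA1 a b c : 1 <= a -> a < b -> b < c -> c <= n ->
    braid_rel n [p a b; p a c; p b c] [p a c; p b c; p a b]
| relA2 a b c : 1 <= a -> a < b -> b < c -> c <= n ->
    braid_rel n [p a c; p b c; p a b] [p b c; p a b; p a c]
| relB1 a b c d : 1 <= a -> a < b -> b < c -> c < d -> d <= n ->
    braid_rel n [p a b; p c d] [p c d; p a b]
| relB2 a b c d : 1 <= a -> a < b -> b < c -> c < d -> d <= n ->
    braid_rel n [p a d; p b c] [p b c; p a d]
| relC a b c d : 1 <= a -> a < b -> b < c -> c < d -> d <= n ->
    braid_rel n [p a c; pinv b c; p b d; p b c] [pinv b c; p b d; p b c; p a c].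

Inductive beq (n : nat) : word -> word -> Prop :=
| beq_refl w : beq n w w
| beq_sym u v : beq n u v -> beq n v u
| beq_trans u v w : beq n u v -> beq n v w -> beq n u w
| beq_free l r x : beq n (l ++ [x; linv x] ++ r) (l ++ r)
| beq_rel l r u v : braid_rel n u v -> beq n (l ++ u ++ r) (l ++ v ++ r).

Inductive prod_of (S : word -> Prop) : word -> Prop :=
| prod_nil : prod_of S []
| prod_snoc w s : prod_of S w -> S s -> prod_of S (w ++ s)
| prod_snoc_inv w s : prod_of S w -> S s -> prod_of S (w ++ winv s).

Definition in_gen (n : nat) (S : word -> Prop) (w : word) : Prop :=
  exists w', prod_of S w' /\ beq n w w'.

Definition in_P (n : nat) (S : nat -> Prop) (w : word) : Prop :=
  in_gen n (fun u => exists a b, 1 <= a /\ a < b /\ b <= n /\ S a /\ S b /\ u = [p a b]) w.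

Definition in_Q (n : nat) (S : nat -> Prop) (w : word) : Prop :=
  in_gen n (fun u => exists a b, 1 <= a /\ a < b /\ b <= n /\ (S a \/ S b) /\ u = [p a b]) w.

Definition brunnian (n : nat) (w : word) : Prop :=
  forall i, 1 <= i <= n -> in_Q n (fun j => j = i) w.

Inductive monic (n : nat) : word -> Prop :=
| monic_p a b : 1 <= a -> a < b -> b <= n -> monic n [p a b]
| monic_pinv a b : 1 <= a -> a < b -> b <= n -> monic n [pinv a b]
| monic_comm x y : monic n x -> monic n y -> ~ beq n (wcomm x y) [] ->
    monic n (wcomm x y).

Definition support (n : nat) (w : word) (i : nat) : Prop :=
  1 <= i <= n /\
  forall S : nat -> Prop, (forall j, S j -> 1 <= j <= n) -> in_P n S w -> S i.

Definition full_support (n : nat) (w : word) : Prop :=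
  forall i, support n w i <-> 1 <= i <= n.

(* Q_{j} is normal in P_n: conjugating a generator of Q_{j} by a generator
   p_{a,b} with a, b <> j stays in Q_{j}, by explicit identities that follow
   from the relations. Hence a monic commutator in which some letter involves
   strand j lies in Q_{j}, so full-support monic commutators are Brunnian.
   Conversely, deleting strand j is a homomorphism that kills Q_{j}; a nontrivial
   word in P_S with j outside S survives it, so a monic commutator in every Q_{i}
   has full support. Finally, a braid in Q_{j} for every j in T is a product of
   monic commutators lying in these Q_{j}, by induction on T: given such a product
   and a new strand j, move the factors avoiding j to the right, which turns the
   factors touching j into monic commutators still touching j; this writes the
   braid as alpha beta with alpha in Q_{j} and beta a word avoiding j, and beta,
   lying in Q_{j}, is killed by deleting strand j, hence trivial. *)

From Stdlib Require Import List Arith Lia.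
From Stdlib Require Import Bool ZArith Setoid Morphisms Classical.
Import ListNotations.

Section GroupWords.
Variable n : nat.

Lemma beq_app_l l u v : beq n u v -> beq n (l ++ u) (l ++ v).
Proof.
  induction 1 as [| | |l' r x|l' r u v H].
  - apply beq_refl.
  - now apply beq_sym.
  - eapply beq_trans; eauto.
  - pose proof (beq_free n (l ++ l') r x) as E. now rewrite <- !app_assoc in E.
  - pose proof (beq_rel n (l ++ l') r u v H) as E. now rewrite <- !app_assoc in E.
Qed.

Lemma beq_app_r r u v : beq n u v -> beq n (u ++ r) (v ++ r).
Proof.
  induction 1 as [| | |l r' x|l r' u v H].
  - apply beq_refl.
  - now apply beq_sym.
  - eapply beq_trans; eauto.
  - pose proof (beq_free n l (r' ++ r) x) as E. now rewrite !app_assoc in *.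
  - pose proof (beq_rel n l (r' ++ r) u v H) as E. now rewrite !app_assoc in *.
Qed.

Global Instance beq_equiv : Equivalence (beq n).
Proof. split; [intro; apply beq_refl | intros ??; apply beq_sym | intros ???; apply beq_trans]. Qed.

Global Instance app_beq_proper : Proper (beq n ==> beq n ==> beq n) (@app letter).
Proof.
  intros u u' Hu v v' Hv. transitivity (u' ++ v); [now apply beq_app_r | now apply beq_app_l].
Qed.

Lemma braid_rel_beq u v : braid_rel n u v -> beq n u v.
Proof. intro H. pose proof (beq_rel n [] [] u v H) as E. now rewrite !app_nil_r in E. Qed.

Lemma linv_involutive x : linv (linv x) = x.
Proof. destruct x; unfold linv; simpl; now rewrite negb_involutive. Qed.

Lemma winv_app u v : winv (u ++ v) = winv v ++ winv u.
Proof. unfold winv. now rewrite map_app, rev_app_distr. Qed.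

Lemma winv_involutive u : winv (winv u) = u.
Proof.
  unfold winv. rewrite map_rev, rev_involutive, map_map.
  erewrite map_ext; [apply map_id | apply linv_involutive].
Qed.

Lemma cancel_winv_r u : beq n (u ++ winv u) [].
Proof.
  induction u as [|x u IH]; [reflexivity|].
  change (winv (x :: u)) with (winv u ++ [linv x]).
  rewrite app_assoc. change (beq n ([x] ++ (u ++ winv u) ++ [linv x]) []).
  rewrite IH. apply (beq_free n [] [] x).
Qed.

Lemma cancel_winv_l u : beq n (winv u ++ u) [].
Proof. rewrite <- (winv_involutive u) at 2. apply cancel_winv_r. Qed.

Global Instance winv_proper : Proper (beq n ==> beq n) winv.
Proof.
  intros u v H. transitivity (winv u ++ (v ++ winv v)).
  - rewrite cancel_winv_r, app_nil_r. reflexivity.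
  - rewrite <- H at 1. rewrite app_assoc, cancel_winv_l. reflexivity.
Qed.

Lemma winv_wcomm x y : winv (wcomm x y) = wcomm y x.
Proof. unfold wcomm. rewrite !winv_app, !winv_involutive, <- !app_assoc. reflexivity. Qed.

Lemma valid_app u v : valid n u -> valid n v -> valid n (u ++ v).
Proof. intros; now apply Forall_app. Qed.

Lemma valid_winv u : valid n u -> valid n (winv u).
Proof.
  intro H. apply Forall_rev, Forall_map. eapply Forall_impl; [|exact H].
  intros [a b s]; unfold valid_letter; simpl; auto.
Qed.

End GroupWords.

Section Generation.
Variable n : nat.
Implicit Types S T : word -> Prop.

Lemma prod_of_app S u v : prod_of S u -> prod_of S v -> prod_of S (u ++ v).
Proof.
  intros Hu Hv; induction Hv; rewrite ?app_nil_r, ?app_assoc; auto; now constructor.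
Qed.

Lemma prod_of_base S s : S s -> prod_of S s.
Proof. intro. apply (prod_snoc S [] s); [constructor | auto]. Qed.

Lemma prod_of_winv S u : prod_of S u -> prod_of S (winv u).
Proof.
  induction 1; [constructor | |]; rewrite winv_app; apply prod_of_app; auto.
  - apply (prod_snoc_inv S [] s); [constructor | auto].
  - rewrite winv_involutive. now apply prod_of_base.
Qed.

Global Instance in_gen_proper S : Proper (beq n ==> iff) (in_gen n S).
Proof.
  intros u v H; split; intros [w [Hw E]]; exists w; split; auto; rewrite <- E;
    [now symmetry | exact H].
Qed.

Lemma gen_beq S u v : beq n u v -> in_gen n S v -> in_gen n S u.
Proof. intros ->. auto. Qed.

Lemma gen_nil S : in_gen n S [].
Proof. exists []; split; [constructor | reflexivity]. Qed.

Lemma gen_base S s : S s -> in_gen n S s.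
Proof. intro; exists s; split; [now apply prod_of_base | reflexivity]. Qed.

Lemma gen_app S u v : in_gen n S u -> in_gen n S v -> in_gen n S (u ++ v).
Proof.
  intros [u' [Hu ->]] [v' [Hv ->]]. exists (u' ++ v'); split; [now apply prod_of_app | reflexivity].
Qed.

Lemma gen_winv S u : in_gen n S u -> in_gen n S (winv u).
Proof. intros [u' [Hu ->]]. exists (winv u'); split; [now apply prod_of_winv | reflexivity]. Qed.

Lemma gen_cons S x w : in_gen n S [x] -> in_gen n S w -> in_gen n S (x :: w).
Proof. apply (gen_app S [x]). Qed.

Lemma gen_pinv S a b : in_gen n S [p a b] -> in_gen n S [pinv a b].
Proof. apply (gen_winv S [p a b]). Qed.

Lemma gen_mono S T u : (forall s, S s -> in_gen n T s) -> in_gen n S u -> in_gen n T u.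
Proof.
  intros ST [u' [Hu ->]].
  induction Hu; [apply gen_nil | |]; apply gen_app; auto; now apply gen_winv, ST.
Qed.

End Generation.

Definition touches (j : nat) (x : letter) : bool := (la x =? j) || (lb x =? j).

Definition touches_strand (j : nat) (w : word) : bool := existsb (touches j) w.

Definition delete_strand (j : nat) (w : word) : word := filter (fun x => negb (touches j x)) w.

Lemma touches_strand_app j u v :
  touches_strand j (u ++ v) = touches_strand j u || touches_strand j v.
Proof. apply existsb_app. Qed.

Lemma touches_strand_winv j u : touches_strand j (winv u) = touches_strand j u.
Proof.
  induction u as [|x u IH]; [reflexivity|].
  change (winv (x :: u)) with (winv u ++ [linv x]).
  rewrite touches_strand_app, IH. simpl. destruct x. rewrite orb_false_r. apply orb_comm.
Qed.

Lemma touches_strand_false j w :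
  touches_strand j w = false -> Forall (fun x => touches j x = false) w.
Proof.
  induction w as [|x w IH]; simpl; intro H; constructor;
    apply orb_false_iff in H as [Hx Hw]; auto.
Qed.

Lemma delete_strand_app j u v : delete_strand j (u ++ v) = delete_strand j u ++ delete_strand j v.
Proof. apply filter_app. Qed.

Lemma delete_strand_avoiding j w :
  Forall (fun x => touches j x = false) w -> delete_strand j w = w.
Proof. induction 1 as [|x w Hx]; simpl; [reflexivity|]. rewrite Hx. simpl. now f_equal. Qed.

(* Only relation (C) with strand [d] deleted needs more than a relation: it becomes
   [p a c; pinv b c; p b c] = [pinv b c; p b c; p a c], a free cancellation. *)
Lemma delete_strand_rel n j u v : braid_rel n u v -> beq n (delete_strand j u) (delete_strand j v).
Proof.
  intro H. pose proof (braid_rel_beq _ _ _ H) as E.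
  destruct H; unfold delete_strand, touches; simpl;
  repeat match goal with |- context [?a =? j] => destruct (Nat.eqb_spec a j) end;
  simpl; subst; try lia; try reflexivity; try exact E.
  change [p a c; pinv b c; p b c] with ([p a c] ++ [pinv b c; linv (pinv b c)] ++ []).
  change [pinv b c; p b c; p a c] with ([] ++ [pinv b c; linv (pinv b c)] ++ [p a c]).
  rewrite !beq_free. reflexivity.
Qed.

Global Instance delete_strand_proper n j : Proper (beq n ==> beq n) (delete_strand j).
Proof.
  intros u v. induction 1 as [| | |l r x|l r u v H].
  - reflexivity.
  - now symmetry.
  - etransitivity; eauto.
  - rewrite !delete_strand_app. simpl. destruct x as [a b s]; unfold touches; simpl.
    destruct ((a =? j) || (b =? j)); simpl; [reflexivity | apply beq_free].
  - rewrite !delete_strand_app. apply app_beq_proper; [reflexivity|].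
    apply app_beq_proper; [now apply delete_strand_rel | reflexivity].
Qed.

Lemma delete_strand_Q n j w : in_Q n (fun k => k = j) w -> beq n (delete_strand j w) [].
Proof.
  intros [w' [Hp ->]].
  induction Hp as [|w0 s Hp IH Hs|w0 s Hp IH Hs]; [reflexivity| |];
    rewrite delete_strand_app, IH; destruct Hs as (a & b & _ & _ & _ & Hj & ->);
    unfold delete_strand, touches; simpl;
    destruct Hj as [-> | ->]; rewrite Nat.eqb_refl, ?orb_true_r; reflexivity.
Qed.

Lemma Q_avoiding_trivial n j w :
  in_Q n (fun k => k = j) w -> Forall (fun x => touches j x = false) w -> beq n w [].
Proof. intros HQ HF. rewrite <- (delete_strand_avoiding j w HF). now apply delete_strand_Q. Qed.

Definition exp_sum (w : word) : Z :=
  fold_right (fun x acc => ((if lsgn x then 1 else -1) + acc)%Z) 0%Z w.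

Lemma exp_sum_app u v : exp_sum (u ++ v) = (exp_sum u + exp_sum v)%Z.
Proof. induction u as [|x u IH]; simpl; [reflexivity|]. rewrite IH. lia. Qed.

Lemma exp_sum_beq n u v : beq n u v -> exp_sum u = exp_sum v.
Proof.
  induction 1 as [| | |l r x|l r u v H]; try congruence; rewrite !exp_sum_app.
  - simpl. destruct (lsgn x); simpl; lia.
  - destruct H; simpl; lia.
Qed.

Lemma p_nontrivial n a b : ~ beq n [p a b] [].
Proof. intro H. apply exp_sum_beq in H. discriminate. Qed.

Lemma pinv_nontrivial n a b : ~ beq n [pinv a b] [].
Proof. intro H. apply exp_sum_beq in H. discriminate. Qed.

Definition normalizes (n : nat) (g : word) (H : word -> Prop) : Prop :=
  forall s, H s -> in_gen n H (winv g ++ s ++ g) /\ in_gen n H (g ++ s ++ winv g).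

Section Normalizers.
Variable n : nat.
Implicit Types H T : word -> Prop.

Lemma conj_closed g H T w : (forall s, H s -> in_gen n T (winv g ++ s ++ g)) ->
  in_gen n H w -> in_gen n T (winv g ++ w ++ g).
Proof.
  intros Hs [w' [Hp ->]].
  assert (conj_app : forall u v,
    beq n (winv g ++ (u ++ v) ++ g) ((winv g ++ u ++ g) ++ (winv g ++ v ++ g))).
  { intros u v. rewrite <- !app_assoc, (app_assoc g (winv g)), cancel_winv_r. reflexivity. }
  induction Hp as [|w0 s Hp IH Hs0|w0 s Hp IH Hs0].
  - simpl. rewrite cancel_winv_l. apply gen_nil.
  - rewrite conj_app. apply gen_app; auto.
  - rewrite conj_app. apply gen_app; auto.
    specialize (Hs s Hs0). apply gen_winv in Hs.
    rewrite !winv_app, winv_involutive, <- app_assoc in Hs. exact Hs.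
Qed.

Lemma normalizes_gen g H w : normalizes n g H -> in_gen n H w ->
  in_gen n H (winv g ++ w ++ g) /\ in_gen n H (g ++ w ++ winv g).
Proof.
  intros HN Hw. split.
  - apply conj_closed with H; auto. intros s Hs; apply (HN s Hs).
  - rewrite <- (winv_involutive g) at 1. apply conj_closed with H; auto.
    intros s Hs. rewrite winv_involutive. apply (HN s Hs).
Qed.

Lemma normalizes_winv g H : normalizes n g H -> normalizes n (winv g) H.
Proof. intros HN s Hs. rewrite winv_involutive. destruct (HN s Hs); split; auto. Qed.

Lemma normalizes_word H g s : (forall x, In x g -> normalizes n [x] H) -> in_gen n H s ->
  in_gen n H (winv g ++ s ++ g).
Proof.
  revert s; induction g as [|x g IH]; intros s Hx Hs.
  - simpl. now rewrite app_nil_r.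
  - replace (winv (x :: g) ++ s ++ x :: g) with (winv g ++ (winv [x] ++ s ++ [x]) ++ g)
      by (change (winv (x :: g)) with (winv g ++ [linv x]); now rewrite <- !app_assoc).
    apply IH; [intros; apply Hx; simpl; auto|].
    apply normalizes_gen; auto. apply Hx; simpl; auto.
Qed.

Lemma normalizes_sub g H T : normalizes n g H -> (forall s, H s -> T s) ->
  forall s, H s -> in_gen n T (winv g ++ s ++ g) /\ in_gen n T (g ++ s ++ winv g).
Proof.
  intros HN HT s Hs. destruct (HN s Hs).
  split; (eapply gen_mono; [|eassumption]); intros; now apply gen_base, HT.
Qed.

Lemma normalizes_union g L1 L2 L :
  normalizes n g (fun s => In s L1) -> normalizes n g (fun s => In s L2) ->
  (forall s, In s L <-> In s L1 \/ In s L2) -> normalizes n g (fun s => In s L).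
Proof.
  intros N1 N2 E s Hs. apply E in Hs as [Hs|Hs];
    [apply (normalizes_sub g _ _ N1) | apply (normalizes_sub g _ _ N2)]; auto;
    intros t Ht; apply E; auto.
Qed.

Lemma normalizes_self g H : H g -> normalizes n g H.
Proof.
  intros Hg s Hs. pose proof (gen_base n H g Hg) as G. pose proof (gen_base n H s Hs) as S.
  split; repeat apply gen_app; auto; now apply gen_winv.
Qed.

Lemma normalizes_commuting g h : beq n (g ++ h) (h ++ g) -> normalizes n g (fun s => In s [h]).
Proof.
  intros E s [<- | []]. split; apply (gen_beq n _ _ h); try (apply gen_base; now left).
  - rewrite <- E, app_assoc, cancel_winv_l. reflexivity.
  - rewrite app_assoc, E, <- app_assoc, cancel_winv_r, app_nil_r. reflexivity.
Qed.

End Normalizers.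

Ltac in_list := simpl; repeat first [left; reflexivity | right].

Ltac gen_letters :=
  lazymatch goal with
  | |- in_gen _ _ [] => apply gen_nil
  | |- in_gen _ _ (_ :: _) =>
      apply gen_cons; [try apply gen_pinv; apply gen_base; in_list | gen_letters]
  end.

Ltac by_identity E := eapply gen_beq; [exact E | gen_letters].

(* Identities between concrete words are certified by a reflexive check: the
   indexed letter [(k, s)] stands for the [k]-th generator to the power [s], and
   [lhs = rhs] holds in [P_n] as soon as [lhs rhs^-1] and a product of conjugates
   [c r^(+-1) c^-1] of known identities [r = (u, v)], read as relators [u v^-1],
   have the same free reduction. *)
Definition aletter := (nat * bool)%type.
Definition aword := list aletter.

Definition ainv (w : aword) : aword := rev (map (fun x : aletter => (fst x, negb (snd x))) w).

Definition reduce_push (st : aword) (x : aletter) : aword :=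
  match st with
  | y :: st' => if (fst x =? fst y) && xorb (snd x) (snd y) then st' else x :: st
  | [] => [x]
  end.

Definition free_reduce (w : aword) : aword := rev (fold_left reduce_push w []).

Definition interp (env : nat -> letter) (w : aword) : word :=
  map (fun x : aletter => if snd x then env (fst x) else linv (env (fst x))) w.

Definition relator (rels : list (aword * aword)) (k : nat) : aword :=
  let uv := nth k rels ([], []) in fst uv ++ ainv (snd uv).

Definition relator_product (rels : list (aword * aword)) (cert : list (aword * nat * bool))
  : aword :=
  flat_map (fun '((c, k, s) : aword * nat * bool) =>
              c ++ (if s then relator rels k else ainv (relator rels k)) ++ ainv c) cert.

Section Certificates.
Variable n : nat.
Variable env : nat -> letter.

Lemma interp_app u v : interp env (u ++ v) = interp env u ++ interp env v.
Proof. apply map_app. Qed.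

Lemma interp_ainv u : interp env (ainv u) = winv (interp env u).
Proof.
  unfold interp, ainv, winv. rewrite map_rev, !map_map. f_equal.
  apply map_ext. intros [k []]; simpl; auto. now rewrite linv_involutive.
Qed.

Lemma reduce_push_beq st x :
  beq n (interp env (rev st ++ [x])) (interp env (rev (reduce_push st x))).
Proof.
  destruct st as [|y st]; [reflexivity|]. destruct x as [k s], y as [k' s']; simpl.
  destruct (Nat.eqb_spec k k'); simpl; [subst | reflexivity].
  destruct s, s'; simpl; try reflexivity;
    rewrite <- app_assoc, interp_app; simpl;
    rewrite <- (app_nil_r (interp env (rev st))) at 2.
  - pose proof (beq_free n (interp env (rev st)) [] (linv (env k'))) as E.
    now rewrite linv_involutive in E.
  - apply beq_free.
Qed.

Lemma free_reduce_beq w : beq n (interp env w) (interp env (free_reduce w)).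
Proof.
  enough (E : forall st, beq n (interp env (rev st ++ w))
                              (interp env (rev (fold_left reduce_push w st)))) by apply (E []).
  induction w as [|x w IH]; intro st; simpl.
  - now rewrite app_nil_r.
  - rewrite <- IH. change (x :: w) with ([x] ++ w).
    rewrite app_assoc, (interp_app (rev st ++ [x])), (interp_app (rev (reduce_push st x))).
    now rewrite reduce_push_beq.
Qed.

Definition holds (rels : list (aword * aword)) : Prop :=
  Forall (fun uv => beq n (interp env (fst uv)) (interp env (snd uv))) rels.

Lemma relator_trivial rels k : holds rels -> beq n (interp env (relator rels k)) [].
Proof.
  intro H. unfold relator. destruct (nth_in_or_default k rels ([], [])) as [Hi | ->].
  - unfold holds in H. rewrite Forall_forall in H.
    rewrite interp_app, interp_ainv, (H _ Hi). apply cancel_winv_r.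
  - reflexivity.
Qed.

Lemma relator_product_trivial rels cert :
  holds rels -> beq n (interp env (relator_product rels cert)) [].
Proof.
  intro H. induction cert as [|[[c k] s] cert IH]; [reflexivity|]. simpl.
  rewrite !interp_app, IH, app_nil_r, interp_ainv.
  assert (Er : beq n (interp env (if s then relator rels k else ainv (relator rels k))) []).
  { destruct s; rewrite ?interp_ainv, relator_trivial; auto; reflexivity. }
  rewrite Er. apply cancel_winv_r.
Qed.

Lemma certificate_sound rels lhs rhs cert : holds rels ->
  free_reduce (lhs ++ ainv rhs) = free_reduce (relator_product rels cert) ->
  beq n (interp env lhs) (interp env rhs).
Proof.
  intros H E.
  assert (Triv : beq n (interp env (lhs ++ ainv rhs)) []).
  { rewrite free_reduce_beq, E, <- free_reduce_beq. now apply relator_product_trivial. }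
  rewrite interp_app, interp_ainv in Triv.
  transitivity (interp env lhs ++ winv (interp env rhs) ++ interp env rhs).
  - rewrite cancel_winv_l, app_nil_r. reflexivity.
  - rewrite app_assoc, Triv. reflexivity.
Qed.

End Certificates.

Ltac index_of x l :=
  lazymatch l with
  | x :: _ => constr:(0)
  | _ :: ?t => let i := index_of x t in constr:(S i)
  end.

Ltac reify gens w :=
  lazymatch w with
  | [] => constr:(@nil aletter)
  | p ?a ?b :: ?t =>
      let i := index_of (p a b) gens in let t' := reify gens t in constr:((i, true) :: t')
  | pinv ?a ?b :: ?t =>
      let i := index_of (p a b) gens in let t' := reify gens t in constr:((i, false) :: t')
  end.

(* [facts] is a right-nested tuple [(f1, (f2, ..., tt))] of proofs of [beq] identities. *)
Ltac reify_facts gens facts :=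
  lazymatch facts with
  | tt => constr:(@nil (aword * aword))
  | (?f, ?fs) =>
      lazymatch type of f with
      | beq _ ?u ?v =>
          let u' := reify gens u in let v' := reify gens v in
          let rs := reify_facts gens fs in constr:((u', v') :: rs)
      end
  end.

Ltac prove_holds facts :=
  lazymatch facts with
  | tt => apply Forall_nil
  | (?f, ?fs) => apply Forall_cons; [exact f | prove_holds fs]
  end.

Ltac certify gens facts cert :=
  lazymatch goal with
  | |- beq ?n ?lhs ?rhs =>
      let l := reify gens lhs in let r := reify gens rhs in
      let rels := reify_facts gens facts in
      refine (certificate_sound n (fun k => nth k gens (p 0 0)) rels l r cert _ _);
      [unfold holds; prove_holds facts | vm_compute; reflexivity]
  end.

Section ThreeStrands.
Variables n u v w : nat.
Hypotheses (Hu : 1 <= u) (Huv : u < v) (Hvw : v < w) (Hw : w <= n).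

Let relA1_uvw : beq n [p u v; p u w; p v w] [p u w; p v w; p u v].
Proof. now apply braid_rel_beq, relA1. Qed.

Let relA2_uvw : beq n [p u w; p v w; p u v] [p v w; p u v; p u w].
Proof. now apply braid_rel_beq, relA2. Qed.

Ltac certify3 cert := certify [p u v; p u w; p v w] (relA1_uvw, (relA2_uvw, tt)) cert.

Lemma p13_conj_p12 : beq n [pinv u v; p u w; p u v] [p u w; p v w; p u w; pinv v w; pinv u w].
Proof.
  certify3 [([(0,false);(1,true)],0,true); ([(0,false)],0,false);
            ([(1,true);(2,true);(0,false);(2,false)],1,true)].
Qed.

Lemma p23_conj_p12 : beq n [pinv u v; p v w; p u v] [p u w; p v w; pinv u w].
Proof.
  certify3 [([(0,false);(2,true);(0,true);(1,true);(0,false);(2,false);(1,false)],0,false);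
            ([(0,false)],1,false)].
Qed.

Lemma p13_conj_p12V : beq n [p u v; p u w; pinv u v] [pinv v w; p u w; p v w].
Proof. certify3 [([(0,true);(1,true);(0,false);(2,false);(1,false)],1,false)]. Qed.

Lemma p23_conj_p12V : beq n [p u v; p v w; pinv u v] [pinv v w; pinv u w; p v w; p u w; p v w].
Proof.
  certify3 [([(0,true);(1,false);(0,false)],0,true);
            ([(0,true);(1,false);(0,false);(2,false)],1,true)].
Qed.

Lemma p12_conj_p23 : beq n [pinv v w; p u v; p v w] [p u v; p u w; p u v; pinv u w; pinv u v].
Proof.
  certify3 [([(2,false)],0,true); ([(2,false)],1,true);
            ([(0,true);(1,true);(2,false);(1,false)],1,false)].
Qed.

Lemma p13_conj_p23 : beq n [pinv v w; p u w; p v w] [p u v; p u w; pinv u v].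
Proof. certify3 [([(2,false)],1,true)]. Qed.

Lemma p12_conj_p23V : beq n [p v w; p u v; pinv v w] [pinv u w; p u v; p u w].
Proof. certify3 [([(2,true);(0,true);(2,false);(1,false);(0,false)],0,false)]. Qed.

Lemma p13_conj_p23V : beq n [p v w; p u w; pinv v w] [pinv u w; pinv u v; p u w; p u v; p u w].
Proof.
  certify3 [([(2,true);(1,true);(2,false);(1,false);(0,false);(1,false)],0,true);
            ([(2,true);(1,true);(0,false);(2,false);(1,false)],0,false);
            ([(2,true);(1,true);(0,false);(2,false);(1,false)],1,false)].
Qed.

Lemma p12_conj_p13 : beq n [pinv u w; p u v; p u w] [p v w; p u v; pinv v w].
Proof. certify3 [([(1,false)],0,true)]. Qed.

Lemma p23_conj_p13 : beq n [pinv u w; p v w; p u w] [p v w; p u v; p v w; pinv u v; pinv v w].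
Proof. certify3 [([(1,false);(2,true)],0,false); ([(1,false)],1,false)]. Qed.

Lemma p12_conj_p13V : beq n [p u w; p u v; pinv u w] [pinv u v; pinv v w; p u v; p v w; p u v].
Proof.
  certify3 [([(1,true);(0,true);(1,false);(0,false);(2,false);(1,true);(2,true);(0,false);
              (2,false);(1,false)],0,false);
            ([(1,true);(0,true);(1,false);(0,false);(2,false)],1,true);
            ([(1,true);(0,false);(2,false);(1,false)],1,false)].
Qed.

Lemma p23_conj_p13V : beq n [p u w; p v w; pinv u w] [pinv u v; p v w; p u v].
Proof.
  certify3 [([(1,true);(2,true);(1,false);(0,false);(2,false)],0,true);
            ([(1,true);(2,true);(1,false);(0,false);(2,false)],1,true)].
Qed.

End ThreeStrands.

Section FourStrands.
Variables n a b c d : nat.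
Hypotheses (Ha : 1 <= a) (Hab : a < b) (Hbc : b < c) (Hcd : c < d) (Hd : d <= n).

Let relC_abcd : beq n [p a c; pinv b c; p b d; p b c] [pinv b c; p b d; p b c; p a c].
Proof. now apply braid_rel_beq, relC. Qed.

Ltac certify4 fact cert :=
  certify [p a b; p a c; p a d; p b c; p b d; p c d] (relC_abcd, (fact, tt)) cert.

Lemma p24_conj_p13 : beq n [pinv a c; p b d; p a c]
  [p b c; p a b; p b c; pinv a b; pinv b c; pinv b c; p b d; p b c; p b c; p a b; pinv b c;
   pinv a b; pinv b c].
Proof.
  certify4 (p23_conj_p13 n a b c Ha Hab Hbc ltac:(lia))
    [([(1,false);(3,true)],0,false); ([],1,true);
     ([(3,true);(0,true);(3,true);(0,false);(3,false);(3,false);(4,true);(3,true);(1,false);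
       (3,false);(1,true)],1,false)].
Qed.

Lemma p24_conj_p13V : beq n [p a c; p b d; pinv a c]
  [pinv a b; p b c; p a b; pinv b c; p b d; p b c; pinv a b; pinv b c; p a b].
Proof.
  certify4 (p23_conj_p13V n a b c Ha Hab Hbc ltac:(lia))
    [([(1,true);(3,true);(1,false)],0,true); ([],1,true);
     ([(0,false);(3,true);(0,true);(3,false);(4,true);(3,true);(1,true);(3,false);(1,false)],
      1,false)].
Qed.

Lemma p13_conj_p24 : beq n [pinv b d; p a c; p b d]
  [p c d; pinv b c; pinv c d; p b c; p a c; pinv b c; p c d; p b c; pinv c d].
Proof.
  certify4 (p12_conj_p13 n b c d ltac:(lia) Hbc Hcd Hd)
    [([(4,false)],0,true); ([(4,false);(3,false);(4,true);(3,true);(1,true);(3,false)],1,true);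
     ([(4,false);(3,false);(4,true)],1,false)].
Qed.

Lemma p13_conj_p24V : beq n [p b d; p a c; pinv b d]
  [pinv b c; pinv c d; pinv b c; p c d; p b c; p b c; p a c; pinv b c; pinv b c; pinv c d;
   p b c; p c d; p b c].
Proof.
  certify4 (p12_conj_p13V n b c d ltac:(lia) Hbc Hcd Hd)
    [([(4,true);(1,true);(4,false);(3,false);(5,false);(3,false);(5,true);(3,true);(3,true);
       (1,false)],0,false);
     ([(4,true);(1,true);(4,false);(3,false);(5,false);(3,false);(5,true);(3,true)],1,true);
     ([(4,true);(3,false);(4,false)],1,false)].
Qed.

End FourStrands.

Section ThreeStrandNormalizers.
Variables n u v w : nat.
Hypotheses (Hu : 1 <= u) (Huv : u < v) (Hvw : v < w) (Hw : w <= n).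

Lemma p12_normalizes_p13_p23 : normalizes n [p u v] (fun s => In s [[p u w]; [p v w]]).
Proof.
  intros s [<- | [<- | []]]; split.
  - by_identity (p13_conj_p12 n u v w Hu Huv Hvw Hw).
  - by_identity (p13_conj_p12V n u v w Hu Huv Hvw Hw).
  - by_identity (p23_conj_p12 n u v w Hu Huv Hvw Hw).
  - by_identity (p23_conj_p12V n u v w Hu Huv Hvw Hw).
Qed.

Lemma p23_normalizes_p12_p13 : normalizes n [p v w] (fun s => In s [[p u v]; [p u w]]).
Proof.
  intros s [<- | [<- | []]]; split.
  - by_identity (p12_conj_p23 n u v w Hu Huv Hvw Hw).
  - by_identity (p12_conj_p23V n u v w Hu Huv Hvw Hw).
  - by_identity (p13_conj_p23 n u v w Hu Huv Hvw Hw).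
  - by_identity (p13_conj_p23V n u v w Hu Huv Hvw Hw).
Qed.

Lemma p13_normalizes_p12_p23 : normalizes n [p u w] (fun s => In s [[p u v]; [p v w]]).
Proof.
  intros s [<- | [<- | []]]; split.
  - by_identity (p12_conj_p13 n u v w Hu Huv Hvw Hw).
  - by_identity (p12_conj_p13V n u v w Hu Huv Hvw Hw).
  - by_identity (p23_conj_p13 n u v w Hu Huv Hvw Hw).
  - by_identity (p23_conj_p13V n u v w Hu Huv Hvw Hw).
Qed.

End ThreeStrandNormalizers.

Ltac letters_normalize N1 N2 :=
  let x := fresh "x" in let Hx := fresh "Hx" in
  intros x Hx; simpl in Hx; repeat destruct Hx as [<- | Hx]; try contradiction;
  first [exact N1 | exact N2 | exact (normalizes_winv _ _ _ N1) | exact (normalizes_winv _ _ _ N2)].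

Ltac list_incl := let t := fresh "t" in intro t; simpl; tauto.

Section FourStrandNormalizers.
Variables n a b c d : nat.
Hypotheses (Ha : 1 <= a) (Hab : a < b) (Hbc : b < c) (Hcd : c < d) (Hd : d <= n).

Lemma p12_normalizes_p34 : normalizes n [p a b] (fun s => In s [[p c d]]).
Proof. apply normalizes_commuting, braid_rel_beq, relB1; lia. Qed.

Lemma p34_normalizes_p12 : normalizes n [p c d] (fun s => In s [[p a b]]).
Proof. apply normalizes_commuting. symmetry. apply braid_rel_beq, relB1; lia. Qed.

Lemma p14_normalizes_p23 : normalizes n [p a d] (fun s => In s [[p b c]]).
Proof. apply normalizes_commuting, braid_rel_beq, relB2; lia. Qed.

Lemma p23_normalizes_p14 : normalizes n [p b c] (fun s => In s [[p a d]]).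
Proof. apply normalizes_commuting. symmetry. apply braid_rel_beq, relB2; lia. Qed.

Lemma p13_normalizes_p12_p23_p24 :
  normalizes n [p a c] (fun s => In s [[p a b]; [p b c]; [p b d]]).
Proof.
  intros s Hs. destruct Hs as [<- | [<- | [<- | []]]].
  1,2: apply (normalizes_sub n _ _ _ (p13_normalizes_p12_p23 n a b c Ha Hab Hbc ltac:(lia)));
       [list_incl | in_list].
  split; [by_identity (p24_conj_p13 n a b c d Ha Hab Hbc Hcd Hd)
         | by_identity (p24_conj_p13V n a b c d Ha Hab Hbc Hcd Hd)].
Qed.

Lemma p13_normalizes_p14_p24_p34 :
  normalizes n [p a c] (fun s => In s [[p a d]; [p b d]; [p c d]]).
Proof.
  set (L := [[p a d]; [p b d]; [p c d]]).
  assert (N23 : normalizes n [p b c] (fun s => In s L)).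
  { apply (normalizes_union n _ [[p b d]; [p c d]] [[p a d]]);
      [apply p12_normalizes_p13_p23; lia | apply p23_normalizes_p14 | list_incl]. }
  assert (N12 : normalizes n [p a b] (fun s => In s L)).
  { apply (normalizes_union n _ [[p a d]; [p b d]] [[p c d]]);
      [apply p12_normalizes_p13_p23; lia | apply p12_normalizes_p34 | list_incl]. }
  intros s Hs. destruct Hs as [<- | [<- | [<- | []]]].
  2: split.
  - apply (normalizes_sub n _ _ _ (p12_normalizes_p13_p23 n a c d Ha ltac:(lia) Hcd Hd));
      [list_incl | in_list].
  - eapply gen_beq; [exact (p24_conj_p13 n a b c d Ha Hab Hbc Hcd Hd)|].
    change (in_gen n (fun s => In s L)
      (winv [p b c; p b c; p a b; pinv b c; pinv a b; pinv b c] ++ [p b d] ++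
       [p b c; p b c; p a b; pinv b c; pinv a b; pinv b c])).
    apply normalizes_word; [letters_normalize N23 N12 | gen_letters].
  - eapply gen_beq; [exact (p24_conj_p13V n a b c d Ha Hab Hbc Hcd Hd)|].
    change (in_gen n (fun s => In s L)
      (winv [p b c; pinv a b; pinv b c; p a b] ++ [p b d] ++ [p b c; pinv a b; pinv b c; p a b])).
    apply normalizes_word; [letters_normalize N23 N12 | gen_letters].
  - apply (normalizes_sub n _ _ _ (p12_normalizes_p13_p23 n a c d Ha ltac:(lia) Hcd Hd));
      [list_incl | in_list].
Qed.

Lemma p24_normalizes_p13_p23_p34 :
  normalizes n [p b d] (fun s => In s [[p a c]; [p b c]; [p c d]]).
Proof.
  intros s Hs. destruct Hs as [<- | [<- | [<- | []]]].
  1: split; [by_identity (p13_conj_p24 n a b c d Ha Hab Hbc Hcd Hd)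
            | by_identity (p13_conj_p24V n a b c d Ha Hab Hbc Hcd Hd)].
  all: apply (normalizes_sub n _ _ _ (p13_normalizes_p12_p23 n b c d ltac:(lia) Hbc Hcd Hd));
       [list_incl | in_list].
Qed.

Lemma p24_normalizes_p12_p13_p14 :
  normalizes n [p b d] (fun s => In s [[p a b]; [p a c]; [p a d]]).
Proof.
  set (L := [[p a b]; [p a c]; [p a d]]).
  assert (N23 : normalizes n [p b c] (fun s => In s L)).
  { apply (normalizes_union n _ [[p a b]; [p a c]] [[p a d]]);
      [apply p23_normalizes_p12_p13; lia | apply p23_normalizes_p14 | list_incl]. }
  assert (N34 : normalizes n [p c d] (fun s => In s L)).
  { apply (normalizes_union n _ [[p a c]; [p a d]] [[p a b]]);
      [apply p23_normalizes_p12_p13; lia | apply p34_normalizes_p12 | list_incl]. }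
  intros s Hs. destruct Hs as [<- | [<- | [<- | []]]].
  2: split.
  - apply (normalizes_sub n _ _ _ (p23_normalizes_p12_p13 n a b d Ha Hab ltac:(lia) Hd));
      [list_incl | in_list].
  - eapply gen_beq; [exact (p13_conj_p24 n a b c d Ha Hab Hbc Hcd Hd)|].
    change (in_gen n (fun s => In s L)
      (winv [pinv b c; p c d; p b c; pinv c d] ++ [p a c] ++ [pinv b c; p c d; p b c; pinv c d])).
    apply normalizes_word; [letters_normalize N23 N34 | gen_letters].
  - eapply gen_beq; [exact (p13_conj_p24V n a b c d Ha Hab Hbc Hcd Hd)|].
    change (in_gen n (fun s => In s L)
      (winv [pinv b c; pinv b c; pinv c d; p b c; p c d; p b c] ++ [p a c] ++
       [pinv b c; pinv b c; pinv c d; p b c; p c d; p b c])).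
    apply normalizes_word; [letters_normalize N23 N34 | gen_letters].
  - apply (normalizes_sub n _ _ _ (p23_normalizes_p12_p13 n a b d Ha Hab ltac:(lia) Hd));
      [list_incl | in_list].
Qed.

End FourStrandNormalizers.

Definition Q_gens (n j : nat) (u : word) : Prop :=
  exists a b, 1 <= a /\ a < b /\ b <= n /\ (a = j \/ b = j) /\ u = [p a b].

Ltac all_Q_gens :=
  let s := fresh "s" in let Hs := fresh "Hs" in
  intros s Hs; simpl in Hs; repeat destruct Hs as [<- | Hs]; try contradiction;
  do 2 eexists; repeat split; try reflexivity; lia.

Ltac Q_family L :=
  exists L; split; [in_list | split; [all_Q_gens |]].

Lemma Q_generator_normalized n j a b x y :
  1 <= a -> a < b -> b <= n -> a <> j -> b <> j -> 1 <= x -> x < y -> y <= n -> x = j \/ y = j ->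
  exists L, In [p x y] L /\ (forall s, In s L -> Q_gens n j s) /\
            normalizes n [p a b] (fun s => In s L).
Proof.
  intros Ha Hab Hb Haj Hbj Hx Hxy Hy Hj.
  assert (Hc : x = a \/ x = b \/ y = a \/ y = b \/ (x <> a /\ x <> b /\ y <> a /\ y <> b)) by lia.
  destruct Hc as [Hc | [Hc | [Hc | [Hc | Hc]]]].
  - subst x. assert (y = j) by lia. subst y. destruct (Nat.lt_ge_cases j b).
    + Q_family [[p a j]; [p j b]]. apply p13_normalizes_p12_p23; lia.
    + Q_family [[p a j]; [p b j]]. apply p12_normalizes_p13_p23; lia.
  - subst x. assert (y = j) by lia. subst y.
    Q_family [[p a j]; [p b j]]. apply p12_normalizes_p13_p23; lia.
  - subst y. assert (x = j) by lia. subst x.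
    Q_family [[p j a]; [p j b]]. apply p23_normalizes_p12_p13; lia.
  - subst y. assert (x = j) by lia. subst x. destruct (Nat.lt_ge_cases j a).
    + Q_family [[p j a]; [p j b]]. apply p23_normalizes_p12_p13; lia.
    + Q_family [[p a j]; [p j b]]. apply p13_normalizes_p12_p23; lia.
  - assert (Hd : y < a \/ b < x \/ (x < a /\ b < y) \/ (a < x /\ y < b) \/
                 (x < a /\ a < y /\ y < b) \/ (a < x /\ x < b /\ b < y)) by lia.
    destruct Hd as [Hd | [Hd | [Hd | [Hd | [Hd | Hd]]]]].
    1-4: Q_family [[p x y]].
    + apply (p34_normalizes_p12 n x y a b); lia.
    + apply (p12_normalizes_p34 n a b x y); lia.
    + apply (p23_normalizes_p14 n x a b y); lia.
    + apply (p14_normalizes_p23 n a x y b); lia.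
    + destruct Hj; subst.
      * Q_family [[p j a]; [p j y]; [p j b]].
        apply (p24_normalizes_p12_p13_p14 n j a y b); lia.
      * Q_family [[p x j]; [p a j]; [p j b]].
        apply (p24_normalizes_p13_p23_p34 n x a j b); lia.
    + destruct Hj; subst.
      * Q_family [[p a j]; [p j b]; [p j y]].
        apply (p13_normalizes_p12_p23_p24 n a j b y); lia.
      * Q_family [[p a j]; [p x j]; [p b j]].
        apply (p13_normalizes_p14_p24_p34 n a x b j); lia.
Qed.

Lemma generator_normalizes_Q n j a b :
  1 <= a -> a < b -> b <= n -> normalizes n [p a b] (Q_gens n j).
Proof.
  intros Ha Hab Hb.
  destruct (Nat.eq_dec a j) as [E | E]; [|destruct (Nat.eq_dec b j) as [E' | E']].
  1,2: apply normalizes_self; exists a, b; repeat split; auto.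
  intros s (x & y & Hx & Hxy & Hy & Hj & ->).
  destruct (Q_generator_normalized n j a b x y) as (L & HL & HQ & HN); auto.
  now apply (normalizes_sub n _ _ _ HN).
Qed.

Lemma Q_conj_closed n j y x : valid n y -> in_Q n (fun k => k = j) x ->
  in_Q n (fun k => k = j) (winv y ++ x ++ y).
Proof.
  intros Hy Hx. apply (normalizes_word n (Q_gens n j)); [|exact Hx].
  intros [a b s] Hl.
  assert (Hv : valid_letter n (Letter a b s)) by (eapply Forall_forall; eauto).
  destruct Hv as (Ha & Hab & Hb), s; simpl in *.
  - now apply generator_normalizes_Q.
  - exact (normalizes_winv n _ _ (generator_normalizes_Q n j a b Ha Hab Hb)).
Qed.

Section Monic.
Variable n : nat.

Lemma monic_valid x : monic n x -> valid n x.
Proof.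
  induction 1.
  1,2: repeat constructor; unfold valid_letter; simpl; lia.
  unfold wcomm. repeat apply valid_app; auto; now apply valid_winv.
Qed.

Lemma monic_winv x : monic n x -> monic n (winv x).
Proof.
  induction 1 as [| |x y Mx _ My _ NT]; [now apply monic_pinv | now apply monic_p |].
  rewrite winv_wcomm. apply monic_comm; auto.
  intro E. apply NT. rewrite <- (winv_involutive (wcomm x y)), winv_wcomm, E. reflexivity.
Qed.

Lemma monic_nontrivial x : monic n x -> ~ beq n x [].
Proof. induction 1; auto using p_nontrivial, pinv_nontrivial. Qed.

(* The commutator [x, y] with [x] in the normal subgroup [Q_{j}] is [x^-1 x^y]. *)
Lemma monic_in_Q j x : monic n x -> touches_strand j x = true -> in_Q n (fun k => k = j) x.
Proof.
  induction 1 as [a b Ha Hab Hb | a b Ha Hab Hb | x y Mx IHx My IHy _]; intro Hj.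
  1,2: unfold touches_strand, touches in Hj; simpl in Hj;
       rewrite orb_false_r in Hj; apply orb_true_iff in Hj as [Hj | Hj]; apply Nat.eqb_eq in Hj.
  1,2: apply gen_base; exists a, b; auto 6.
  1,2: apply (gen_pinv n _ a b), gen_base; exists a, b; auto 6.
  unfold wcomm in *. rewrite !touches_strand_app, !touches_strand_winv in Hj.
  destruct (touches_strand j x) eqn:Ex.
  - apply gen_app; [now apply gen_winv, IHx|].
    apply Q_conj_closed; [now apply monic_valid | now apply IHx].
  - destruct (touches_strand j y) eqn:Ey; [|discriminate].
    rewrite app_assoc, app_assoc, <- (app_assoc (winv x)).
    apply gen_app; [|now apply IHy].
    apply Q_conj_closed; [now apply monic_valid | now apply gen_winv, IHy].
Qed.

End Monic.

Section Decomposition.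
Variable n : nat.

Definition in_Qs (T : list nat) (x : word) : Prop :=
  forall i, In i T -> in_Q n (fun k => k = i) x.

Definition monic_in_Qs T x := monic n x /\ in_Qs T x.
Definition touching j T x := monic_in_Qs T x /\ touches_strand j x = true.
Definition avoiding j T x := monic_in_Qs T x /\ touches_strand j x = false.

Lemma in_Qs_app T u v : in_Qs T u -> in_Qs T v -> in_Qs T (u ++ v).
Proof. intros Hu Hv i Hi. apply gen_app; [apply Hu | apply Hv]; auto. Qed.

Lemma in_Qs_winv T u : in_Qs T u -> in_Qs T (winv u).
Proof. intros Hu i Hi. apply gen_winv, Hu, Hi. Qed.

Lemma monic_in_Qs_winv T x : monic_in_Qs T x -> monic_in_Qs T (winv x).
Proof. intros [M A]. split; [now apply monic_winv | now apply in_Qs_winv]. Qed.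

Lemma avoiding_winv j T x : avoiding j T x -> avoiding j T (winv x).
Proof. intros [C A]. split; [now apply monic_in_Qs_winv | now rewrite touches_strand_winv]. Qed.

Lemma gen_monic_of_valid w : valid n w -> in_gen n (monic_in_Qs []) w.
Proof.
  induction 1 as [|[a b s] w (Ha & Hab & Hb) _ IH]; [apply gen_nil|].
  apply gen_cons; auto. apply gen_base. split; [|intros i []].
  destruct s; [now apply monic_p | now apply monic_pinv].
Qed.

(* [b x b^-1 = x [x, b^-1]], and the commutator, unless trivial, is again a
   monic commutator touching [j]. *)
Lemma touching_conj j T b x : avoiding j T b -> touching j T x ->
  in_gen n (touching j T) (b ++ x ++ winv b).
Proof.
  intros Eb [[Mx Ax] Hx].
  destruct (avoiding_winv j T b Eb) as [[Mb' Ab'] Hb'].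
  assert (E : beq n (b ++ x ++ winv b) (x ++ wcomm x (winv b))).
  { unfold wcomm. rewrite winv_involutive, (app_assoc x (winv x)), cancel_winv_r. reflexivity. }
  rewrite E. destruct (classic (beq n (wcomm x (winv b)) [])) as [Z | NZ].
  - rewrite Z, app_nil_r. now apply gen_base.
  - apply gen_app; apply gen_base; [now repeat split|].
    repeat split; [now apply monic_comm | |].
    + unfold wcomm. repeat apply in_Qs_app; auto; now apply in_Qs_winv.
    + unfold wcomm. now rewrite !touches_strand_app, !touches_strand_winv, Hx.
Qed.

Lemma avoiding_prod_conj j T beta : prod_of (avoiding j T) beta ->
  forall s, in_gen n (touching j T) s -> in_gen n (touching j T) (beta ++ s ++ winv beta).
Proof.
  assert (Conj1 : forall b s, avoiding j T b -> in_gen n (touching j T) s ->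
                    in_gen n (touching j T) (b ++ s ++ winv b)).
  { intros b s Eb Hs. rewrite <- (winv_involutive b) at 1.
    apply conj_closed with (touching j T); auto.
    intros x Dx. rewrite winv_involutive. now apply touching_conj. }
  induction 1 as [|w0 b Hp IH Hb|w0 b Hp IH Hb]; intros s Hs.
  - simpl. now rewrite app_nil_r.
  - replace ((w0 ++ b) ++ s ++ winv (w0 ++ b)) with (w0 ++ (b ++ s ++ winv b) ++ winv w0)
      by (rewrite winv_app, <- !app_assoc; reflexivity).
    auto.
  - replace ((w0 ++ winv b) ++ s ++ winv (w0 ++ winv b))
      with (w0 ++ (winv b ++ s ++ winv (winv b)) ++ winv w0)
      by (rewrite (winv_app w0), <- !app_assoc; reflexivity).
    auto using avoiding_winv.
Qed.

Lemma split_touching_avoiding j T w : prod_of (monic_in_Qs T) w ->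
  exists alpha beta, in_gen n (touching j T) alpha /\ prod_of (avoiding j T) beta /\
                     beq n w (alpha ++ beta).
Proof.
  assert (Step : forall w s alpha beta,
    in_gen n (touching j T) alpha -> prod_of (avoiding j T) beta ->
    beq n w (alpha ++ beta) -> monic_in_Qs T s ->
    exists alpha' beta', in_gen n (touching j T) alpha' /\ prod_of (avoiding j T) beta' /\
                         beq n (w ++ s) (alpha' ++ beta')).
  { intros w0 s alpha beta Ha Hb Hw Cs. destruct (touches_strand j s) eqn:Hs.
    - exists (alpha ++ (beta ++ s ++ winv beta)), beta. repeat split; auto.
      + apply gen_app; auto. apply avoiding_prod_conj; auto. now apply gen_base.
      + rewrite Hw, <- !app_assoc, cancel_winv_l, app_nil_r. reflexivity.
    - exists alpha, (beta ++ s). repeat split; auto.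
      + now apply prod_snoc.
      + rewrite Hw, app_assoc. reflexivity. }
  induction 1 as [|w0 s Hp IH Hs|w0 s Hp IH Hs].
  - exists [], []. repeat split; [apply gen_nil | constructor | reflexivity].
  - destruct IH as (a & b & Ha & Hb & Hw). eapply Step; eauto.
  - destruct IH as (a & b & Ha & Hb & Hw). eapply Step; eauto. now apply monic_in_Qs_winv.
Qed.

Lemma avoiding_prod_avoids j T beta : prod_of (avoiding j T) beta ->
  Forall (fun x => touches j x = false) beta.
Proof.
  induction 1 as [|w0 b Hp IH Hb|w0 b Hp IH Hb]; [constructor | |];
    apply Forall_app; split; auto; apply touches_strand_false.
  - apply Hb.
  - rewrite touches_strand_winv. apply Hb.
Qed.

Lemma gen_monic_in_Qs T w : valid n w -> in_Qs T w -> in_gen n (monic_in_Qs T) w.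
Proof.
  revert w; induction T as [|j T IH]; intros w Hv HQ; [now apply gen_monic_of_valid|].
  destruct (IH w Hv) as (w' & Hp & Hw'); [intros i Hi; apply HQ; now right|].
  destruct (split_touching_avoiding j T w' Hp) as (alpha & beta & Ha & Hb & Hab).
  assert (Qalpha : in_Q n (fun k => k = j) alpha).
  { eapply gen_mono; [|exact Ha]. intros x [[Mx _] Hx]. now apply monic_in_Q. }
  assert (Qbeta : in_Q n (fun k => k = j) beta).
  { rewrite <- (app_nil_l beta), <- (cancel_winv_l n alpha), <- app_assoc, <- Hab, <- Hw'.
    apply gen_app; [now apply gen_winv | apply HQ; now left]. }
  assert (Tbeta : beq n beta []).
  { apply (Q_avoiding_trivial n j); auto. eapply avoiding_prod_avoids; eauto. }
  rewrite Hw', Hab, Tbeta, app_nil_r.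
  eapply gen_mono; [|exact Ha]. intros x [[Mx Ax] Hx]. apply gen_base.
  split; auto. intros i [<- | Hi]; auto. now apply monic_in_Q.
Qed.

End Decomposition.

Section Support.
Variable n : nat.

Lemma prod_P_letters (S : nat -> Prop) w :
  prod_of (fun u => exists a b, 1 <= a /\ a < b /\ b <= n /\ S a /\ S b /\ u = [p a b]) w ->
  Forall (fun x => S (la x) /\ S (lb x)) w.
Proof.
  induction 1 as [|w0 s Hp IH Hs|w0 s Hp IH Hs]; [constructor | |];
    apply Forall_app; split; auto;
    destruct Hs as (a & b & _ & _ & _ & Sa & Sb & ->); repeat constructor; auto.
Qed.

Lemma in_P_of_letters (S : nat -> Prop) w :
  valid n w -> Forall (fun x => S (la x) /\ S (lb x)) w -> in_P n S w.
Proof.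
  induction 1 as [|[a b s] w (Ha & Hab & Hb) _ IH]; intro HS; [apply gen_nil|].
  inversion HS as [|? ? [Sa Sb] HS']; subst; simpl in *.
  apply gen_cons; [|now apply IH].
  destruct s; [|apply gen_pinv]; apply gen_base; exists a, b; auto 7.
Qed.

(* A monic commutator lying in [P_S] with [i] not in [S] is a word avoiding
   strand [i]; if it also lies in [Q_{i}], deleting strand [i] shows it is trivial. *)
Lemma monic_Brunnian_full_support x :
  monic n x -> (forall i, 1 <= i <= n -> in_Q n (fun k => k = i) x) -> full_support n x.
Proof.
  intros M HQ i. split; [now intros [H _]|]. intro Hi. split; auto.
  intros S _ [x' [Hp Hx']]. apply NNPP; intro nS.
  apply (monic_nontrivial n x M). rewrite Hx'.
  apply (Q_avoiding_trivial n i); [rewrite <- Hx'; now apply HQ|].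
  eapply Forall_impl; [|exact (prod_P_letters S x' Hp)].
  intros [a b s] [Sa Sb]; unfold touches; simpl.
  destruct (Nat.eqb_spec a i), (Nat.eqb_spec b i); subst; tauto.
Qed.

(* Every strand in the support of [x] carries a letter of [x]: take for [S] the
   set of strands occurring in [x]. *)
Lemma full_support_touches x i :
  valid n x -> full_support n x -> 1 <= i <= n -> touches_strand i x = true.
Proof.
  intros V FS Hi.
  set (S := fun k => exists l, In l x /\ (la l = k \/ lb l = k)).
  assert (HS : forall k, S k -> 1 <= k <= n).
  { intros k (l & Hl & Hk). destruct (proj1 (Forall_forall _ _) V l Hl) as (A & B & C). lia. }
  assert (HP : in_P n S x).
  { apply in_P_of_letters; auto. apply Forall_forall. intros l Hl. split; exists l; auto. }
  destruct (proj2 (FS i) Hi) as [_ Hsup]. destruct (Hsup S HS HP) as (l & Hl & Hk).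
  apply existsb_exists. exists l. split; auto. unfold touches.
  destruct Hk as [<- | <-]; rewrite Nat.eqb_refl, ?orb_true_r; reflexivity.
Qed.

End Support.

Theorem corollary2p3 (n : nat) (w : word) :
  valid n w ->
  (brunnian n w <-> in_gen n (fun x => monic n x /\ full_support n x) w).
Proof.
  intro Hv. split.
  - intro Hb. assert (HQ : in_Qs n (seq 1 n) w).
    { intros i Hi. apply in_seq in Hi. apply Hb. lia. }
    eapply gen_mono; [|exact (gen_monic_in_Qs n (seq 1 n) w Hv HQ)].
    intros x [M A]. apply gen_base. split; auto.
    apply monic_Brunnian_full_support; auto. intros i Hi. apply A, in_seq. lia.
  - intros Hg i Hi. eapply gen_mono; [|exact Hg].
    intros x [M FS]. apply (monic_in_Q n); auto.
    apply (full_support_touches n); auto. now apply monic_valid.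
Qed.
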